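(* Let $q=p^m$ with $p$ an odd prime, $q\equiv 1\pmod 3$, $q\geq 13$. The connected components of $C_P(q)$ are exactly: (1) the $q(q-1)$ isolated vertices, which are the maps $\pi(x)=ax+b$ with $a\neq 0$ (equivalently $\pi(\infty)=\infty$); and (2) the $q-1$ induced subgraphs $[P_r]$, $r\in GF(q)\setminus\{0\}$, each of which is connected.
   Context: $PGL(2,q)$ is the group of maps $x\mapsto\frac{ax+b}{cx+d}$ ($a,b,c,d\in GF(q)$, $ad\neq bc$) acting on $GF(q)\cup\{\infty\}$ with the usual conventions ($-d/c\mapsto\infty$, $\infty\mapsto a/c$ if $c\neq0$, $\infty\mapsto\infty$ if $c=0$). For $K,i\in GF(q)$ and $r\in GF(q)\setminus\{0\}$, $f_{K,r,i}$ is the element of $PGL(2,q)$ with $f_{K,r,i}(x)=K+\frac{r}{x-i}$ for $x\notin\{i,\infty\}$, $f_{K,r,i}(\infty)=K$, $f_{K,r,i}(i)=\infty$. For $r\neq0$, $P_r=\{f_{a,r,i}: a,i\in GF(q)\}$. $hd(\pi,\sigma)$ is the number of points at which $\pi,\sigma$ differ. With distinguished element $F=\infty$, $\pi^{\triangle}$ is the permutation with $\pi^{\triangle}(\pi^{-1}(\infty))=\pi(\infty)$, $\pi^{\triangle}(\infty)=\infty$, $\pi^{\triangle}(x)=\pi(x)$ otherwise. The contraction graph $C_P(q)$ has vertex set $PGL(2,q)$, with distinct $\pi,\sigma$ adjacent iff $hd(\pi^{\triangle},\sigma^{\triangle})=q-4$. $[S]$ denotes the induced subgraph on $S$. *)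

From HB Require Import structures.
From mathcomp Require Import all_boot all_order all_algebra all_fingroup all_field.
Set Implicit Arguments. Unset Strict Implicit. Unset Printing Implicit Defensive.
Import GRing.Theory.
Local Open Scope ring_scope.

Section PGL.
Variable F : finFieldType.

(* The projective line GF(q) ∪ {∞}: [Some x] is x, [None] is ∞. *)
Definition pt := option F.
Definition pmap := {ffun pt -> pt}.

Definition mob (a b c d : F) : pmap :=
  [ffun x : pt => match x with
    | Some x0 => if c * x0 + d == 0 then None else Some ((a * x0 + b) / (c * x0 + d))
    | None => if c == 0 then None else Some (a / c)
    end].

(* PGL(2,q) as the set of maps it induces on GF(q) ∪ {∞}. *)
Definition PGL : {set pmap} :=
  [set f | [exists a : F, exists b : F, exists c : F, exists d : F,
              (a * d != b * c) && (f == mob a b c d)]].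

Definition fKri (K r i : F) : pmap :=
  [ffun x : pt => match x with
    | Some x0 => if x0 == i then None else Some (K + r / (x0 - i))
    | None => Some K
    end].

Definition Pr (r : F) : {set pmap} := [set fKri a r i | a in [set: F], i in [set: F]].

Definition Aff : {set pmap} := [set mob a b 0 1 | a in [set a : F | a != 0], b in [set: F]].

Definition hd (f g : pmap) : nat := #|[set x | f x != g x]|.

Definition tri (f : pmap) : pmap :=
  [ffun x : pt => match x with
    | None => None
    | Some _ => if f x == None then f None else f x
    end].

Definition CPadj : rel pmap :=
  fun f g => [&& f \in PGL, g \in PGL, f != g & hd (tri f) (tri g) == (#|F| - 4)%N].

Definition CPcomp (v : pmap) : {set pmap} := [set w | connect CPadj v w].

Definition CPcomponents : {set {set pmap}} := [set CPcomp v | v in PGL].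

End PGL.

From Pilot Require Import Defs.
From mathcomp Require Import all_boot all_algebra all_fingroup all_field all_solvable.
From mathcomp Require Import ring zify.
Set Implicit Arguments. Unset Strict Implicit. Unset Printing Implicit Defensive.
Import GRing.Theory FinRing.Theory.
Local Open Scope ring_scope.

(* The contraction of every element of PGL(2,q) fixes infinity, so two vertices are
   adjacent exactly when the self-maps of GF(q) they induce agree at exactly four
   points.  Off the poles, the agreement equation of two such maps is at most
   quadratic.  Hence an affine map agrees with any other vertex at no more than
   three points and is isolated, while f_{K,r,i} and f_{K',r',i'} can only agree at
   four points if both poles are agreement points, which forces r = r': each P_r is a
   union of components.  Conversely, since 3 divides q - 1 there is a root w of
   X^2 + X + 1, and f_{K,r,i}, f_{K+r/a,r,i+a} agree exactly at the images of
   0, -1, w, w^2 under t |-> i - a t; these moves connect any two elements of P_r. *)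

Lemma natr_card_eq0 (R : finNzRingType) : #|R|%:R = 0 :> R.
Proof. by rewrite -zmodXgE -cardsT expg_cardG ?inE. Qed.

Lemma natr_neq0_card_modn (R : finNzRingType) (n : nat) :
  (#|R| %% n = 1)%N -> n%:R != 0 :> R.
Proof.
move=> cardR; apply/eqP => n0; have := natr_card_eq0 R.
by rewrite (divn_eq #|R| n) cardR natrD natrM n0 mulr0 add0r => /eqP; rewrite oner_eq0.
Qed.

Lemma exists_primitive_cube_root (F : finFieldType) :
  (#|F| %% 3 = 1)%N -> exists w : F, w ^+ 2 + w + 1 = 0.
Proof.
move=> cardF.
have dvd3 : (3 %| #|[set: {unit F}]|)%N.
  by rewrite card_finField_unit {1}(divn_eq #|F| 3) cardF addn1 /= dvdn_mull.
have [u _ ord_u] := Cauchy (isT : prime 3) dvd3.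
have u3 : val u ^+ 3 = 1 by rewrite -val_unitX -ord_u expg_order.
have u1 : val u != 1.
  by apply/eqP => /(@val_inj _ _ _ u 1%g) u_1; move: ord_u; rewrite u_1 order1.
have [x x3 x1] : exists2 x : F, x ^+ 3 = 1 & x != 1 by exists (val u).
exists x.
have : (x - 1) * (x ^+ 2 + x + 1) = 0.
  have -> : (x - 1) * (x ^+ 2 + x + 1) = x ^+ 3 - 1 by ring.
  by rewrite x3 subrr.
by move/eqP; rewrite mulf_eq0 subr_eq0 (negbTE x1) => /eqP.
Qed.

Definition quadratic_roots (F : finFieldType) (A B C : F) : {set F} :=
  [set x | A * x ^+ 2 + B * x + C == 0].

Lemma card_quadratic_roots (F : finFieldType) (A B C : F) :
  [|| A != 0, B != 0 | C != 0] -> (#|quadratic_roots A B C| <= 2)%N.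
Proof.
move=> nz; set p := Poly [:: C; B; A].
have p0 : p != 0.
  apply: contraTneq nz => p0; have c i : p`_i = [:: C; B; A]`_i := coef_Poly _ i.
  by move: (c 0%N) (c 1%N) (c 2%N); rewrite p0 !coef0 /= => <- <- <-; rewrite eqxx.
have rootP x : root p x = (A * x ^+ 2 + B * x + C == 0).
  by rewrite rootE horner_Poly /=; congr (_ == 0); ring.
rewrite cardE -ltnS; apply: leq_trans (size_Poly [:: C; B; A]).
by apply: max_poly_roots p0 _ (enum_uniq _); apply/allP => x; rewrite mem_enum inE rootP.
Qed.

Lemma connect_closed_set (T : finType) (e : rel T) (A : {set T}) (x : T) :
  closed e A -> x \in A -> {in A, forall y, connect e x y} ->
  [set y | connect e x y] = A.
Proof.
move=> clA xA conn; apply/setP => y; rewrite inE.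
by apply/idP/idP => [/(closed_connect clA) <-|/conn].
Qed.

Section ContractionGraph.

Variable F : finFieldType.
Local Notation pmap := (Defs.pmap F).
Local Notation PGL := (PGL F).
Local Notation CPadj := (@CPadj F).

Definition ext_inf (v : F -> F) : pmap := [ffun x => omap v x].

Definition agree (u v : F -> F) : {set F} := [set x | u x == v x].

Definition affine_fun (a b x : F) : F := a * x + b.

Definition fKri_fin (K r i x : F) : F := if x == i then K else K + r / (x - i).

Lemma fKri_fin_pole (K r i : F) : fKri_fin K r i i = K.
Proof. by rewrite /fKri_fin eqxx. Qed.

Lemma fKri_fin_neq (K r i x : F) : x != i -> fKri_fin K r i x = K + r / (x - i).
Proof. by rewrite /fKri_fin => /negbTE ->. Qed.

Lemma tri_mob_affine (a b : F) : tri (mob a b 0 1) = ext_inf (affine_fun a b).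
Proof.
by apply/ffunP => -[x|]; rewrite !ffunE //= mul0r add0r oner_eq0 divr1.
Qed.

Lemma tri_fKri (K r i : F) : tri (fKri K r i) = ext_inf (fKri_fin K r i).
Proof. by apply/ffunP => -[x|]; rewrite !ffunE //= /fKri_fin; case: (x == i). Qed.

Lemma hd_ext_inf (u v : F -> F) : hd (ext_inf u) (ext_inf v) = (#|F| - #|agree u v|)%N.
Proof.
rewrite /hd; have -> : [set x | ext_inf u x != ext_inf v x] = Some @: ~: agree u v.
  apply/setP => -[x|]; rewrite !inE !ffunE /=; last by apply/esym/imsetP => -[y].
  by rewrite (mem_imset _ _ (@Some_inj _)) !inE.
rewrite card_imset; last exact: Some_inj.
by rewrite cardsCs setCK.
Qed.

Lemma CPadj_sym : symmetric CPadj.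
Proof.
move=> f g; rewrite /CPadj /hd eq_sym.
have -> : [set x | tri f x != tri g x] = [set x | tri g x != tri f x].
  by apply/setP => x; rewrite !inE eq_sym.
by case: (f \in PGL); case: (g \in PGL).
Qed.

Lemma mob_PGL (a b c d : F) : a * d != b * c -> mob a b c d \in PGL.
Proof.
move=> det; rewrite inE; apply/existsP; exists a; apply/existsP; exists b.
by apply/existsP; exists c; apply/existsP; exists d; rewrite det eqxx.
Qed.

Lemma mob_affine_PGL (a b : F) : a != 0 -> mob a b 0 1 \in PGL.
Proof. by move=> a0; apply: mob_PGL; rewrite mulr1 mulr0. Qed.

Lemma fKri_mob (K r i : F) : fKri K r i = mob K (r - K * i) 1 (- i).
Proof.
apply/ffunP => -[x|]; rewrite !ffunE /=; last by rewrite oner_eq0 divr1.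
rewrite mul1r subr_eq0; case: eqP => // /eqP xi.
by congr Some; field; rewrite subr_eq0.
Qed.

Lemma fKri_PGL (K r i : F) : r != 0 -> fKri K r i \in PGL.
Proof.
move=> r0; rewrite fKri_mob; apply: mob_PGL.
by rewrite mulr1 -subr_eq0 opprB mulrN addKr oppr_eq0.
Qed.

Variant PGL_spec (f : pmap) : Prop :=
  | PGL_affine (a b : F) of a != 0 & f = mob a b 0 1
  | PGL_fKri (K r i : F) of r != 0 & f = fKri K r i.

Lemma PGLP (f : pmap) : f \in PGL -> PGL_spec f.
Proof.
rewrite inE => /existsP[a /existsP[b /existsP[c /existsP[d /andP[det /eqP ->]]]]].
have [c0|c0] := eqVneq c 0.
  subst c; rewrite mulr0 in det.
  have d0 : d != 0 by apply: contraNneq det => ->; rewrite mulr0.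
  have a0 : a != 0 by apply: contraNneq det => ->; rewrite mul0r.
  apply: (@PGL_affine _ (a / d) (b / d)); first by rewrite mulf_neq0 ?invr_eq0.
  apply/ffunP => -[x|]; rewrite !ffunE /= ?eqxx // !mul0r !add0r (negbTE d0) oner_eq0.
  by rewrite divr1 mulrDl mulrAC.
have det' : b * c - a * d != 0 by rewrite subr_eq0 eq_sym.
apply: (@PGL_fKri _ (a / c) ((b * c - a * d) / c ^+ 2) (- (d / c))).
  by rewrite mulf_neq0 ?invr_eq0 ?expf_neq0.
rewrite fKri_mob; apply/ffunP => -[x|]; rewrite !ffunE /=.
  have cxd : c * x + d = c * (x + d / c) by field.
  rewrite cxd mulf_eq0 (negbTE c0) opprK mul1r /=.
  by case: eqP => // /eqP nz; congr Some; field; rewrite c0 mulrC cxd mulf_neq0.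
by rewrite (negbTE c0) oner_eq0; congr Some; rewrite divr1.
Qed.

Lemma fKri_inj (K r i K' r' i' : F) :
  fKri K r i = fKri K' r' i' -> [/\ K = K', r = r' & i = i'].
Proof.
move=> /ffunP e; have := e None; rewrite !ffunE => -[KK'].
have ii' : i = i'.
  by have := e (Some i); rewrite !ffunE /= eqxx; case: eqP.
subst K' i'; have i1 : i + 1 - i = 1 by rewrite addrAC subrr add0r.
have := e (Some (i + 1)); rewrite !ffunE /= -subr_eq0 i1 oner_eq0 !divr1.
by case=> /addrI ->.
Qed.

Lemma card_agree_affine (a b a' b' : F) : (a != a') || (b != b') ->
  (#|agree (affine_fun a b) (affine_fun a' b')| <= 2)%N.
Proof.
move=> ne; have nz : [|| 0 != 0 :> F, a - a' != 0 | b - b' != 0] by rewrite eqxx !subr_eq0.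
apply: leq_trans (card_quadratic_roots nz).
apply/subset_leq_card/subsetP => x; rewrite !inE /affine_fun => /eqP e.
by rewrite mul0r add0r mulrBl addrACA -opprD e subrr.
Qed.

Lemma card_agree_affine_fKri (a b K r i : F) : a != 0 ->
  (#|agree (affine_fun a b) (fKri_fin K r i)| <= 3)%N.
Proof.
move=> a0; set Q := quadratic_roots a (b - K - a * i) (- (b - K) * i - r).
have nz : [|| a != 0, b - K - a * i != 0 | - (b - K) * i - r != 0] by rewrite a0.
have iQ : (#|i |: Q| <= 3)%N.
  by rewrite cardsU1 (leq_add (leq_b1 _) (card_quadratic_roots nz)).
apply: leq_trans iQ; apply/subset_leq_card/subsetP => x; rewrite !inE.
have [//|xi] := eqVneq x i; rewrite fKri_fin_neq // /affine_fun => /eqP e.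
have xi0 : x - i != 0 by rewrite subr_eq0.
apply/eqP; transitivity ((x - i) * (a * x + b - (K + r / (x - i)))); first by field.
by rewrite e subrr mulr0.
Qed.

Lemma card_agree_fKri_off_poles (K r i K' r' i' : F) : r != r' ->
  (#|agree (fKri_fin K r i) (fKri_fin K' r' i') :\: [set i; i']| <= 2)%N.
Proof.
move=> rr'; have nz : [|| K - K' != 0, r - r' - (K - K') * (i + i') != 0
                        | (K - K') * i * i' - r * i' + r' * i != 0].
  by case: eqP => [->|] //=; rewrite mul0r subr0 subr_eq0 rr'.
apply: leq_trans (card_quadratic_roots nz); apply/subset_leq_card/subsetP => x.
rewrite !inE negb_or => /andP[/andP[xi xi']]; rewrite !fKri_fin_neq // => /eqP e.
have xi0 : x - i != 0 by rewrite subr_eq0.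
have xi0' : x - i' != 0 by rewrite subr_eq0.
apply/eqP; transitivity ((x - i) * (x - i') * (K + r / (x - i) - (K' + r' / (x - i')))).
  by field; rewrite xi0 xi0'.
by rewrite e subrr mulr0.
Qed.

Lemma card_agree_fKri_eq4 (K r i K' r' i' : F) :
  #|agree (fKri_fin K r i) (fKri_fin K' r' i')| = 4%N -> r = r'.
Proof.
set A := agree _ _; set S := [set i; i'] => card4.
have [//|rr'] := eqVneq r r'.
have AS_ge2 : (2 <= #|A :&: S|)%N.
  rewrite -(leq_add2r #|A :\: S|) cardsID card4 -[4%N]/(2 + 2)%N leq_add2l.
  exact: card_agree_fKri_off_poles.
have S_le : (#|A :&: S| <= #|S|)%N := subset_leq_card (subsetIr A S).
have ii' : i != i' by move: (leq_trans AS_ge2 S_le); rewrite cards2; case: (i != i').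
have /subset_cardP/(_ (subsetIr A S)) AS : #|A :&: S| = #|S|.
  by apply/eqP; rewrite eqn_leq S_le cards2 ii'.
have poleA x : x \in S -> fKri_fin K r i x = fKri_fin K' r' i' x.
  by move=> xS; have := AS x; rewrite in_setI xS andbT inE => /eqP.
have e1 : K = K' + r' / (i - i').
  by rewrite -(fKri_fin_pole K r i) poleA ?fKri_fin_neq // !inE eqxx.
have e2 : K + r / (i' - i) = K'.
  by rewrite -(fKri_fin_pole K' r' i') -poleA ?fKri_fin_neq 1?eq_sym // !inE eqxx orbT.
have ii0 : i - i' != 0 by rewrite subr_eq0.
have ii0' : i' - i != 0 by rewrite subr_eq0 eq_sym.
have r_eq : r = (K - K') * (i - i') by rewrite -e2; field.
have r'_eq : r' = (K - K') * (i - i') by rewrite e1; field.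
by move: rr'; rewrite r_eq r'_eq eqxx.
Qed.

Lemma PGL_fix_inf : [set f in PGL | f None == None] = Aff F.
Proof.
apply/setP => f; rewrite inE; apply/andP/imset2P => [[/PGLP[a b a0 ->|K r i _ ->]]|].
    by exists a b; rewrite ?inE.
  by rewrite ffunE.
case=> a b; rewrite inE => a0 _ ->; split; first exact: mob_affine_PGL.
by rewrite ffunE /= eqxx.
Qed.

Lemma card_nonzero : #|[set r : F | r != 0]| = (#|F| - 1)%N.
Proof.
have -> : [set r : F | r != 0] = [set~ 0] by apply/setP => r; rewrite !inE.
by rewrite cardsC1 subn1.
Qed.

Lemma card_Aff : #|Aff F| = (#|F| * (#|F| - 1))%N.
Proof.
rewrite /Aff curry_imset2X card_imset ?cardsX ?cardsT; last first.
  move=> [a b] [a' b'] /= /ffunP e; have := e (Some 0); have := e (Some 1).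
  rewrite !ffunE /= !mul0r !add0r oner_eq0 !divr1 !mulr0 !add0r !mulr1 => -[e1] [e0].
  by rewrite e0 in e1 *; move/addIr: e1 ->.
by rewrite card_nonzero mulnC.
Qed.

Lemma Pr_inj : injective (@Pr F).
Proof.
move=> r r' e; have : fKri 0 r 0 \in Pr r' by rewrite -e; apply/imset2P; exists 0 0.
by case/imset2P => K i _ _ /fKri_inj[].
Qed.

Lemma card_Pr_family : #|[set Pr r | r in [set r : F | r != 0]]| = (#|F| - 1)%N.
Proof.
by rewrite card_imset ?card_nonzero //; exact: Pr_inj.
Qed.

Hypothesis card_ge4 : (4 <= #|F|)%N.

Lemma CPadjE (f g : pmap) (u v : F -> F) :
  tri f = ext_inf u -> tri g = ext_inf v ->
  CPadj f g = [&& f \in PGL, g \in PGL, f != g & #|agree u v| == 4%N].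
Proof.
move=> trif trig; rewrite /CPadj trif trig hd_ext_inf.
have le_agree : (#|agree u v| <= #|F|)%N := max_card _.
by congr [&& _, _, _ & _]; apply/eqP/eqP; lia.
Qed.

Lemma mob_affine_isolated (a b : F) (g : pmap) : a != 0 -> ~~ CPadj (mob a b 0 1) g.
Proof.
move=> a0; apply/negP => adj.
have /PGLP[a' b' _ gE|K r i _ gE] : g \in PGL by case/and4P: adj.
  move: adj; rewrite gE (CPadjE (tri_mob_affine _ _) (tri_mob_affine _ _)).
  case/and4P => _ _ ne /eqP c4.
  have : (a != a') || (b != b').
    by apply: contraNT ne; rewrite negb_or !negbK => /andP[/eqP-> /eqP->].
  by move/card_agree_affine; rewrite c4.
move: adj; rewrite gE (CPadjE (tri_mob_affine _ _) (tri_fKri _ _ _)) => /and4P[_ _ _ /eqP c4].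
by have := card_agree_affine_fKri b K r i a0; rewrite c4.
Qed.

Lemma CPcomp_mob_affine (a b : F) : a != 0 -> CPcomp (mob a b 0 1) = [set mob a b 0 1].
Proof.
move=> a0; apply: connect_closed_set; rewrite ?set11 //; last first.
  by move=> g; rewrite inE => /eqP ->.
move=> f g adj; rewrite !inE.
have [fE|_] := eqVneq f (mob a b 0 1).
  by move: adj; rewrite fE (negbTE (mob_affine_isolated _ _ a0)).
have [gE|//] := eqVneq g (mob a b 0 1).
by move: adj; rewrite gE CPadj_sym (negbTE (mob_affine_isolated _ _ a0)).
Qed.

Lemma CPadj_Pr (r : F) (f g : pmap) : CPadj f g -> f \in Pr r -> g \in Pr r.
Proof.
move=> adj /imset2P[K i _ _ fE]; subst f.
have /PGLP[a b a0 gE|K' r' i' _ gE] : g \in PGL by case/and4P: adj.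
  by move: adj; rewrite gE CPadj_sym (negbTE (mob_affine_isolated _ _ a0)).
move: adj; rewrite gE (CPadjE (tri_fKri _ _ _) (tri_fKri _ _ _)).
case/and4P => _ _ _ /eqP/card_agree_fKri_eq4 <-.
by apply/imset2P; exists K' i'.
Qed.

Lemma Pr_closed (r : F) : closed CPadj (Pr r).
Proof.
move=> f g adj; apply/idP/idP; first exact: CPadj_Pr.
by apply: CPadj_Pr; rewrite CPadj_sym.
Qed.

Section Connectivity.

Variable w : F.
Hypothesis w_root : w ^+ 2 + w + 1 = 0.
Hypothesis two_neq0 : 2%:R != 0 :> F.
Hypothesis three_neq0 : 3%:R != 0 :> F.

Lemma cube_root_factor (t : F) : t ^+ 2 + t + 1 = (t - w) * (t - w ^+ 2).
Proof.
transitivity ((t - w) * (t - w ^+ 2) + (w ^+ 2 + w + 1) * (t + 1 - w)); first by ring.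
by rewrite w_root mul0r addr0.
Qed.

Lemma uniq_0N1_cube_roots : uniq [:: 0; -1; w; w ^+ 2].
Proof.
have w2E : w ^+ 2 = - w - 1 by rewrite -[LHS]subr0 -w_root; ring.
have w0 : w != 0.
  by apply/eqP => w0; move: w_root; rewrite w0 expr0n /= !add0r => /eqP; rewrite oner_eq0.
have wN1 : w != -1.
  by apply/eqP => wN1; move: w_root; rewrite wN1 sqrrN expr1n subrr add0r => /eqP; rewrite oner_eq0.
have w1 : w != 1.
  apply/eqP => w1; move: three_neq0; rewrite -w_root w1 expr1n.
  have -> : 3%:R = 1 + 1 + 1 :> F by ring.
  by rewrite eqxx.
have w2N1 : w ^+ 2 != -1 by rewrite w2E subr_eq addNr oppr_eq0.
have ww2 : w != w ^+ 2 by rewrite expr2 -{1}(mulr1 w) (inj_eq (mulfI w0)) eq_sym.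
rewrite /= !inE !negb_or ![0 == _]eq_sym ![-1 == _]eq_sym.
by rewrite [0 == -1]eq_sym oppr_eq0 oner_eq0 w0 expf_neq0 // wN1 w2N1 ww2.
Qed.

Lemma card_agree_fKri_move (K r i a : F) : r != 0 -> a != 0 ->
  #|agree (fKri_fin K r i) (fKri_fin (K + r / a) r (i + a))| = 4%N.
Proof.
move=> r0 a0; have ia : i != i + a by rewrite -subr_eq0 opprD addrA subrr sub0r oppr_eq0.
have inj : injective (fun t => i - a * t) by move=> s t /addrI/oppr_inj/(mulfI a0).
rewrite -(card_preimset _ inj); move/card_uniqP: uniq_0N1_cube_roots => /= <-.
apply: eq_card => t; rewrite !inE.
have [->|t0] := eqVneq t 0.
  rewrite mulr0 subr0 fKri_fin_pole fKri_fin_neq // opprD addrA subrr sub0r.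
  by rewrite invrN mulrN addrK eqxx.
have [->|tN1] := eqVneq t (-1).
  rewrite orbT mulrN1 opprK fKri_fin_pole fKri_fin_neq 1?eq_sym //.
  by rewrite addrAC subrr add0r eqxx.
have t10 : t + 1 != 0 by rewrite -[1]opprK subr_eq0.
have ti : i - a * t != i.
  by rewrite -subr_eq0 (_ : _ - _ = - (a * t)) ?oppr_eq0 ?mulf_neq0 //; ring.
have tia : i - a * t != i + a.
  by rewrite -subr_eq0 (_ : _ - _ = - (a * (t + 1))) ?oppr_eq0 ?mulf_neq0 //; ring.
rewrite !fKri_fin_neq // -subr_eq0.
have -> : K + r / (i - a * t - i) - (K + r / a + r / (i - a * t - (i + a))) =
    - (r / (a * t * (t + 1))) * (t ^+ 2 + t + 1).
  by field; rewrite a0 t0 t10 !subr_eq0 tia ti.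
rewrite mulf_eq0 oppr_eq0 mulf_eq0 (negbTE r0) invr_eq0.
by rewrite (negbTE (mulf_neq0 (mulf_neq0 a0 t0) t10)) cube_root_factor mulf_eq0 !subr_eq0.
Qed.

Lemma CPadj_fKri_move (K r i a : F) : r != 0 -> a != 0 ->
  CPadj (fKri K r i) (fKri (K + r / a) r (i + a)).
Proof.
move=> r0 a0; rewrite (CPadjE (tri_fKri _ _ _) (tri_fKri _ _ _)) !fKri_PGL //=.
rewrite card_agree_fKri_move // eqxx andbT.
apply/eqP => /fKri_inj[_ _ /eqP].
by rewrite -{1}[i]addr0 (inj_eq (addrI i)) eq_sym (negbTE a0).
Qed.

Lemma connect_fKri_same_pole (K K' r i : F) : r != 0 ->
  connect CPadj (fKri K r i) (fKri K' r i).
Proof.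
move=> r0; have [<-|KK'] := eqVneq K K'; first exact: connect0.
(* Moves by a, a and -2a return to the pole i and add 3r/(2a) to K. *)
have dK : K' - K != 0 by rewrite subr_eq0 eq_sym.
pose a := 3%:R * r / (2%:R * (K' - K)).
have a0 : a != 0 by rewrite !mulf_neq0 ?invr_eq0 ?mulf_neq0.
have a2 : - (2%:R * a) != 0 by rewrite oppr_eq0 mulf_neq0.
have -> : fKri K' r i =
    fKri (K + r / a + r / a + r / - (2%:R * a)) r (i + a + a + - (2%:R * a)).
  congr fKri; rewrite /a; last by ring.
  by field; rewrite dK two_neq0 three_neq0 r0 oppr_eq0 mulf_neq0.
apply: connect_trans (connect1 (CPadj_fKri_move K i r0 a0)) _.
apply: connect_trans (connect1 (CPadj_fKri_move _ _ r0 a0)) _.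
exact: connect1 (CPadj_fKri_move _ _ r0 a2).
Qed.

Lemma connect_Pr (K r i K' i' : F) : r != 0 ->
  connect CPadj (fKri K r i) (fKri K' r i').
Proof.
move=> r0; have [<-|ii'] := eqVneq i i'; first exact: connect_fKri_same_pole.
pose a := i' - i; have a0 : a != 0 by rewrite subr_eq0 eq_sym.
apply: (connect_trans (y := fKri (K' - r / a) r i)); first exact: connect_fKri_same_pole.
have -> : fKri K' r i' = fKri (K' - r / a + r / a) r (i + a) by rewrite subrK addrC subrK.
exact: connect1 (CPadj_fKri_move _ _ r0 a0).
Qed.

Lemma CPcomp_fKri (K r i : F) : r != 0 -> CPcomp (fKri K r i) = Pr r.
Proof.
move=> r0; apply: connect_closed_set (Pr_closed r) _ _; first by apply/imset2P; exists K i.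
by move=> g /imset2P[K' i' _ _ ->]; exact: connect_Pr.
Qed.

Lemma CPcomponentsE : CPcomponents F =
  [set [set f] | f in Aff F] :|: [set Pr r | r in [set r : F | r != 0]].
Proof.
apply/setP => C; rewrite inE; apply/imsetP/orP.
  case=> _ /PGLP[a b a0 ->|K r i r0 ->] ->.
    left; rewrite CPcomp_mob_affine //; apply/imsetP; exists (mob a b 0 1) => //.
    by apply/imset2P; exists a b; rewrite ?inE.
  by right; rewrite CPcomp_fKri //; apply/imsetP; exists r; rewrite ?inE.
case=> [/imsetP[_ /imset2P[a b a0 _ ->] ->]|/imsetP[r r0 ->]].
  rewrite inE in a0; exists (mob a b 0 1); first exact: mob_affine_PGL.
  by rewrite CPcomp_mob_affine.
rewrite inE in r0; exists (fKri 0 r 0); first exact: fKri_PGL.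
by rewrite CPcomp_fKri.
Qed.

End Connectivity.

End ContractionGraph.

Local Close Scope ring_scope.

Theorem theorem14 (p m : nat) (F : finFieldType)
  (hp : prime p) (hodd : odd p) (hq : #|F| = p ^ m)
  (h3 : #|F| %% 3 = 1) (h13 : 13 <= #|F|) :
  [/\ [set f in PGL F | f None == None] = Aff F,
      #|Aff F| = (#|F| * (#|F| - 1))%N,
      #|[set Pr r | r in [set r : F | r != 0%R]]| = (#|F| - 1)%N &
      CPcomponents F =
        [set [set f] | f in Aff F] :|: [set Pr r | r in [set r : F | r != 0%R]]].
Proof.
have card_ge4 : 4 <= #|F| by apply: leq_trans h13.
have [w w_root] := exists_primitive_cube_root h3.
have two_neq0 : (2%:R != 0 :> F)%R.
  by apply: natr_neq0_card_modn; rewrite modn2 hq oddX hodd orbT.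
have three_neq0 := natr_neq0_card_modn h3.
split; [exact: PGL_fix_inf | exact: card_Aff | exact: card_Pr_family |].
exact: (CPcomponentsE card_ge4 w_root two_neq0 three_neq0).
Qed.
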